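(* Let $\Phi$ be an automorphism of $\Theta^0(\mathcal V)$ satisfying both of the following: (1) $\Phi(A)=A$ for every object $A$; (2) $s_A(x)=x$ for every object $A$ and every $x\in X_A$. Let $\omega$ be a basic operation symbol of arity $k\ge1$. Let $A$ be an object with basis $X_A=\{x_1,\dots,x_n\}$, where $n\ge k$. Put $\tilde w=s_A(\omega_A(x_1,\dots,x_k))\in A$. For each object $B$ and $b_1,\dots,b_k\in B$, define $$\tilde\omega_B(b_1,\dots,b_k)=\nu(\tilde w),$$ where $\nu:A\to B$ is the homomorphism with $\nu(x_i)=b_i$ for $i\le k$ and $\nu(x_i)=b_k$ for $k<i\le n$. Thus $\tilde\omega_B$ is the term (polynomial) operation on $B$ given by the term $\tilde w$. Then for every object $B$ and all $b_1,\dots,b_k\in B$, $$s_B(\omega_B(b_1,\dots,b_k))=\tilde\omega_B(s_B(b_1),\dots,s_B(b_k)).$$ That is, $s_B$ is an isomorphism of $B$ onto the algebra on the same set whose basic operations are the term operations $\tilde\omega_B$.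
   Context: $\mathcal V$ is a variety of universal algebras, and $X_0$ is a fixed infinite set. $\Theta^0(\mathcal V)$ is the full subcategory of the category of $\mathcal V$-algebras whose objects are the free $\mathcal V$-algebras on finite subsets of $X_0$. Each object $A$ has a designated basis $X_A\subseteq X_0$. Among the objects is the free algebra $A_0$ on a single $x_0\in X_0$. For an object $A$ and $a\in A$, $\alpha^A_a:A_0\to A$ is the homomorphism with $x_0\mapsto a$. For an automorphism $\Phi$ fixing $A_0$, the main function is $s_A(a)=\Phi(\alpha^A_a)(x_0)$. Each $s_A$ is a bijection, and $\Phi(\mu)=s_B\circ\mu\circ s_A^{-1}$ for every morphism $\mu:A\to B$. For an operation symbol $\omega$, $\omega_A$ denotes the corresponding operation of $A$. *)

From HB Require Import structures.
From mathcomp Require Import all_boot finmap.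
From Stdlib Require Import ClassicalEpsilon.

Set Implicit Arguments.
Unset Strict Implicit.
Unset Printing Implicit Defensive.

Local Open Scope fset_scope.

Section UnivAlg.
Variables (Op : Type) (ar : Op -> nat).

Record algebra := Algebra {
  car :> Type;
  ops : forall o : Op, ('I_(ar o) -> car) -> car
}.

Inductive term (V : Type) : Type :=
| Var : V -> term V
| App : forall o : Op, ('I_(ar o) -> term V) -> term V.

Fixpoint eval (A : algebra) (V : Type) (v : V -> A) (t : term V) : A :=
  match t with
  | Var x => v x
  | App o ts => @ops A o (fun i => eval v (ts i))
  end.

(* A variety is the class of models of a set E of identities
   (pairs of terms in countably many variables), by Birkhoff. *)
Definition satisfies (E : term nat -> term nat -> Prop) (A : algebra) : Prop :=
  forall l r, E l r -> forall v : nat -> A, eval v l = eval v r.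

Definition is_hom (A B : algebra) (h : A -> B) : Prop :=
  forall (o : Op) (a : 'I_(ar o) -> A), h (@ops A o a) = @ops B o (fun i => h (a i)).

(* [F] is the free algebra of the variety Mod(E) on the set S, with basis
   map [gen] (only its values on S matter). *)
Definition is_free (E : term nat -> term nat -> Prop) (X0 : choiceType)
    (S : {fset X0}) (F : algebra) (gen : X0 -> F) : Prop :=
  satisfies E F /\
  forall B : algebra, satisfies E B -> forall f : X0 -> B,
    exists h : F -> B,
      [/\ is_hom h,
          (forall x, x \in S -> h (gen x) = f x) &
          (forall h' : F -> B, is_hom h' ->
             (forall x, x \in S -> h' (gen x) = f x) -> forall y, h' y = h y)].

End UnivAlg.

Arguments Var {Op ar V}.
Arguments App {Op ar V}.

(* Objects: F S, for S a finite subset of X0 (basis gen S on S).        *)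
(* Morphisms A -> B: homomorphisms F A -> F B.                          *)
Section Theta0.
Variables (Op : Type) (ar : Op -> nat) (X0 : choiceType).
Variable F : {fset X0} -> algebra ar.
Variable gen : forall S : {fset X0}, X0 -> F S.

Definition hom_map := forall A B : {fset X0}, (F A -> F B) -> (F A -> F B).

(* Phi is an automorphism of Theta^0(V) with Phi(A) = A for every object A:
   a functor (hom-preserving, identities, composition) which is bijective on
   each hom-set (it has an inverse Psi). *)
Definition obj_fixing_automorphism (Phi : hom_map) : Prop :=
  [/\ (forall A B (h : F A -> F B), is_hom h -> is_hom (Phi A B h)),
      (forall A (y : F A), Phi A A id y = y),
      (forall A B C (g : F A -> F B) (h : F B -> F C), is_hom g -> is_hom h ->
         forall y, Phi A C (h \o g) y = Phi B C h (Phi A B g y)) &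
      exists Psi : hom_map,
        forall A B (h : F A -> F B), is_hom h ->
          [/\ is_hom (Psi A B h),
              (forall y, Phi A B (Psi A B h) y = h y) &
              (forall y, Psi A B (Phi A B h) y = h y)]].

Variable x0 : X0.

Definition A0 : {fset X0} := [fset x0].

Definition alpha (A : {fset X0}) (a : F A) : F A0 -> F A :=
  epsilon (inhabits (fun _ : F A0 => a))
          (fun h => is_hom h /\ h (gen A0 x0) = a).

(* The main function s_A(a) = Phi(alpha^A_a)(x0). *)
Definition main_fun (Phi : hom_map) (A : {fset X0}) (a : F A) : F A :=
  Phi A0 A (alpha a) (gen A0 x0).

(* nu : A -> B is the homomorphism with nu(x_i) = c_i for i <= k and
   nu(x_i) = c_k for k < i <= n, where x_{i+1} = xs i.                   *)
Definition subst_hom (A B : {fset X0}) (n : nat) (xs : nat -> X0)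
    (k : nat) (c : 'I_k -> F B) (nu : F A -> F B) : Prop :=
  [/\ is_hom nu,
      (forall i (Hi : i < k), nu (gen A (xs i)) = c (Ordinal Hi)) &
      (forall i, k <= i < n -> forall j : 'I_k, val j = k.-1 ->
         nu (gen A (xs i)) = c j)].

End Theta0.

(* Every morphism mu : A -> B satisfies s_B \o mu = Phi(mu) \o s_A, because
   mu \o alpha^A_a = alpha^B_(mu a) and Phi is a functor.  Let mu : A -> B
   send x_i to b_i (and x_i to b_k for i > k).  Since s_A fixes the basis,
   Phi(mu) sends x_i to s_B(b_i), so Phi(mu) is the substitution nu of the
   statement; hence s_B(omega_B(b)) = s_B(mu(omega_A(x))) = Phi(mu)(s_A(omega_A(x)))
   = nu(w~). *)
From Stdlib Require Import ClassicalEpsilon FunctionalExtensionality.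
From HB Require Import structures.
From mathcomp Require Import all_boot finmap.

Set Implicit Arguments.
Unset Strict Implicit.
Unset Printing Implicit Defensive.

Local Open Scope fset_scope.

Section FreeAlgebras.
Variables (Op : Type) (ar : Op -> nat) (E : term ar nat -> term ar nat -> Prop).
Variables (X0 : choiceType) (F : {fset X0} -> algebra ar).
Variable gen : forall S : {fset X0}, X0 -> F S.
Hypothesis F_free : forall S : {fset X0}, is_free E S (gen S).

Lemma free_satisfies (S : {fset X0}) : satisfies E (F S).
Proof. by case: (F_free S). Qed.

Lemma free_hom_ext (S T : {fset X0}) (h1 h2 : F S -> F T) :
  is_hom h1 -> is_hom h2 -> (forall x, x \in S -> h1 (gen S x) = h2 (gen S x)) ->
  forall y, h1 y = h2 y.
Proof.
move=> hom1 hom2 e12 y.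
case: (F_free S) => _ /(_ _ (@free_satisfies T) (fun x => h2 (gen S x))) [h [_ _ uniq_h]].
by rewrite (uniq_h _ hom1 e12) (uniq_h _ hom2).
Qed.

Variable x0 : X0.

Lemma alphaP (S : {fset X0}) (a : F S) :
  is_hom (alpha gen (x0:=x0) a) /\ alpha gen (x0:=x0) a (gen (A0 x0) x0) = a.
Proof.
rewrite /alpha; match goal with |- context [epsilon ?i ?P] => apply: (epsilon_spec i P) end.
case: (F_free (A0 x0)) => _ /(_ _ (@free_satisfies S) (fun _ => a)) [h [hom_h h_gen _]].
by exists h; split => //; apply: h_gen; rewrite in_fset1.
Qed.

Lemma alpha_comp (S T : {fset X0}) (mu : F S -> F T) (a : F S) :
  is_hom mu -> forall y, mu (alpha gen (x0:=x0) a y) = alpha gen (x0:=x0) (mu a) y.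
Proof.
move=> hom_mu; have [hom_a gen_a] := alphaP a; have [hom_mua gen_mua] := alphaP (mu a).
apply: free_hom_ext => [o v /=|//|x]; first by rewrite hom_a hom_mu.
by rewrite in_fset1 => /eqP ->; rewrite gen_a gen_mua.
Qed.

Lemma main_fun_hom (Phi : hom_map F) (S T : {fset X0}) (mu : F S -> F T) (a : F S) :
  obj_fixing_automorphism Phi -> is_hom mu ->
  main_fun gen x0 Phi (mu a) = Phi S T mu (main_fun gen x0 Phi a).
Proof.
case=> _ _ Phi_comp _ hom_mu; have [hom_a _] := alphaP a.
rewrite /main_fun -(Phi_comp _ _ _ _ _ hom_a hom_mu); congr (Phi _ _ _ _).
by apply: functional_extensionality => y; rewrite /= alpha_comp.
Qed.

Section Substitution.
Variables (A : {fset X0}) (n : nat) (xs : nat -> X0).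
Hypothesis xs_inj : {in [pred i | i < n] &, injective xs}.
Hypothesis xs_basis : forall x, x \in A <-> exists2 i, i < n & xs i = x.

Lemma xs_in_basis i : i < n -> xs i \in A.
Proof. by move=> lt_in; apply/xs_basis; exists i. Qed.

Lemma subst_hom_ext (B : {fset X0}) (k : nat) (c : 'I_k -> F B) (mu nu : F A -> F B) :
  0 < k -> subst_hom gen n xs c mu -> subst_hom gen n xs c nu -> forall y, mu y = nu y.
Proof.
move=> k_gt0 [hom_mu mu_lt mu_ge] [hom_nu nu_lt nu_ge].
apply: free_hom_ext => // x /xs_basis [i lt_in <-].
case: (ltnP i k) => [lt_ik | le_ki]; first by rewrite mu_lt nu_lt.
have lt_k1k : k.-1 < k by rewrite prednK.
by rewrite (mu_ge i _ (Ordinal lt_k1k)) ?(nu_ge i _ (Ordinal lt_k1k)) ?le_ki.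
Qed.

Lemma subst_hom_exists (B : {fset X0}) (k : nat) (c : 'I_k -> F B) :
  0 < k -> k <= n -> exists mu : F A -> F B, subst_hom gen n xs c mu.
Proof.
move=> k_gt0 le_kn; have lt_k1k : k.-1 < k by rewrite prednK.
pose basis := [seq xs i | i <- iota 0 n].
have index_basis i : i < n -> index (xs i) basis = i.
  move=> lt_in; have uniq_basis : uniq basis.
    by rewrite map_inj_in_uniq ?iota_uniq // => p q; rewrite !mem_iota; apply: xs_inj.
  have -> : xs i = nth (xs 0) basis i by rewrite (nth_map 0) ?size_iota ?nth_iota.
  by rewrite index_uniq ?size_map ?size_iota.
pose f x := c (insubd (Ordinal lt_k1k) (index x basis)).
case: (F_free A) => _ /(_ _ (@free_satisfies B) f) [mu [hom_mu mu_gen _]].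
exists mu; split=> // [i lt_ik | i /andP[le_ki lt_in] j val_j].
  have lt_in := leq_trans lt_ik le_kn.
  rewrite mu_gen ?xs_in_basis // /f index_basis //.
  by congr c; apply: val_inj; rewrite val_insubd lt_ik.
rewrite mu_gen ?xs_in_basis // /f index_basis //.
by congr c; apply: val_inj; rewrite val_insubd ltnNge le_ki val_j.
Qed.

Lemma subst_hom_main_fun (Phi : hom_map F) (B : {fset X0}) (k : nat)
    (c : 'I_k -> F B) (mu : F A -> F B) :
  obj_fixing_automorphism Phi ->
  (forall x, x \in A -> main_fun gen x0 Phi (gen A x) = gen A x) -> k <= n ->
  subst_hom gen n xs c mu ->
  subst_hom gen n xs (fun i => main_fun gen x0 Phi (c i)) (Phi A B mu).
Proof.
move=> PhiP basis_fixed le_kn [hom_mu mu_lt mu_ge].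
have Phi_gen i : i < n -> Phi A B mu (gen A (xs i)) = main_fun gen x0 Phi (mu (gen A (xs i))).
  by move=> lt_in; rewrite main_fun_hom // basis_fixed ?xs_in_basis.
have [Phi_hom _ _ _] := PhiP.
split=> [|i lt_ik | i /andP[le_ki lt_in] j val_j]; first exact: Phi_hom.
  by rewrite Phi_gen ?mu_lt // (leq_trans lt_ik le_kn).
by rewrite Phi_gen ?(mu_ge i _ j) ?le_ki.
Qed.

End Substitution.
End FreeAlgebras.

Theorem mainTheorem6
  (Op : Type) (ar : Op -> nat) (E : term ar nat -> term ar nat -> Prop)
  (X0 : choiceType) (X0_infinite : forall s : seq X0, exists x, x \notin s)
  (F : {fset X0} -> algebra ar) (gen : forall S : {fset X0}, X0 -> F S)
  (F_free : forall S : {fset X0}, @is_free Op ar E X0 S (F S) (gen S))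
  (x0 : X0)
  (Phi : hom_map F)
  (HPhi : obj_fixing_automorphism Phi)
  (Hbasis : forall (A : {fset X0}) (x : X0), x \in A ->
              main_fun gen x0 Phi (gen A x) = gen A x)
  (omega : Op) (Hk : 1 <= ar omega)
  (A : {fset X0}) (n : nat) (xs : nat -> X0)
  (Hxs_inj : {in [pred i | i < n] &, injective xs})
  (Hxs_basis : forall x, x \in A <-> exists2 i, i < n & xs i = x)
  (Hnk : ar omega <= n) :
  let wt := main_fun gen x0 Phi
              (@ops Op ar (F A) omega (fun i : 'I_(ar omega) => gen A (xs (val i)))) in
  forall (B : {fset X0}) (b : 'I_(ar omega) -> F B) (nu : F A -> F B),
    @subst_hom Op ar X0 F gen A B n xs (ar omega) (fun i => main_fun gen x0 Phi (b i)) nu ->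
    main_fun gen x0 Phi (@ops Op ar (F B) omega b) = nu wt.
Proof.
move=> wt B b nu nu_subst.
have [mu mu_subst] := subst_hom_exists F_free Hxs_inj Hxs_basis b Hk Hnk.
have [hom_mu mu_lt _] := mu_subst.
have mu_omega : mu (ops (fun i : 'I_(ar omega) => gen A (xs i))) = ops b.
  rewrite hom_mu; congr (ops _); apply: functional_extensionality => i.
  by rewrite (mu_lt i (ltn_ord i)); congr b; apply: val_inj.
rewrite -mu_omega (main_fun_hom F_free x0 _ HPhi hom_mu).
apply: (subst_hom_ext F_free Hxs_basis Hk _ nu_subst).
exact: (subst_hom_main_fun F_free Hxs_basis HPhi (Hbasis A) Hnk mu_subst).
Qed.
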